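(* Let $m\ge2$, $a,b\in(0,1/m)$, $f=f_{a,b}$, $X=X_{a,b}$, and let $\bar\pi\colon X\to D^{\mathbb Z}$ be defined by $\bar\pi(p)=(\kappa(\omega_n))_{n\in\mathbb Z}$ where $(\omega_n)_{n\in\mathbb Z}=\pi_{a,b}(p)$. Let $$A=\{\omega\in\Sigma_D:\liminf_{i\to\infty}H_i(\omega)=-\infty\text{ or }\liminf_{i\to-\infty}H_i(\omega)=-\infty\}.$$ Then the restriction of $\bar\pi$ to $\bar\pi^{-1}(A)$ is a homeomorphism onto its image.
   Context: $F_a(x)=\frac{x-(i-1)a}{a}$ on $[(i-1)a,ia)$, $i\in\{1,\ldots,m\}$, $F_a(x)=\frac{x-ma}{1-ma}$ on $[ma,1]$. $\Omega_i^+=[(i-1)a,ia)\times[0,1]$ for $i\le m$; $\Omega_i^+=[ma,1]\times[\frac{i-m-1}{m},\frac{i-m}{m})$ for $m+1\le i\le2m-1$; $\Omega_{2m}^+=[ma,1]\times[\frac{m-1}{m},1]$. $f_a(x,y)=(F_a(x),\frac{y}{m}+\frac{i-1}{m})$ on $\Omega_i^+$ for $i\le m$, $f_a(x,y)=(F_a(x),my-i+m+1)$ on $\Omega_i^+$ for $i\ge m+1$. $\Omega_i=\Omega_i^+\times[0,1]$, $f_{a,b}(x,y,z)=(f_a(x,y),(1-mb)z)$ on $\Omega_i$ for $i\le m$, $f_{a,b}(x,y,z)=(f_a(x,y),bz+1-mb+b(i-m-1))$ on $\Omega_i$ for $i\ge m+1$ (a bijection of $[0,1]^3$). $X_{a,b}=\bigcap_{n\in\mathbb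 Z}f_{a,b}^{-n}(\bigcup_i\mathrm{int}\,\Omega_i)$ with the subspace topology of $\mathbb R^3$, and $\pi_{a,b}(p)=(\omega_n)_{n\in\mathbb Z}$ with $f_{a,b}^n(p)\in\mathrm{int}\,\Omega_{\omega_n}$. $D=\{\alpha_1,\ldots,\alpha_m,\beta_1,\ldots,\beta_m\}$, $\kappa(i)=\alpha_i$, $\kappa(i+m)=\beta_i$ for $i\le m$; $D^{\mathbb Z}$ has the product topology. $\Sigma_D=\{\omega\in D^{\mathbb Z}:\mathrm{red}(\omega_i\cdots\omega_j)\ne0\ \forall i<j\}$, where $\mathrm{red}$ evaluates a word in the monoid with zero generated by $D$ and unit $1$ with relations $\alpha_i\cdot\beta_j=\delta_{i,j}$, $0\cdot0=0$, $\gamma\cdot1=1\cdot\gamma=\gamma$, $\gamma\cdot0=0\cdot\gamma=0$ (the image of $\bar\pi$ lies in $\Sigma_D$). For $\omega\in\Sigma_D$: $H_0(\omega)=0$; for $i\ge1$, $H_i(\omega)$ is the number of $j\in\{0,\ldots,i-1\}$ with $\omega_j\in\{\alpha_1,\ldots,\alpha_m\}$ minus the number with $\omega_j\in\{\beta_1,\ldots,\beta_m\}$; for $i\le-1$, $H_i(\omega)$ is the number of $j\in\{i,\ldots,-1\}$ with $\omega_j\in\{\beta_1,\ldots,\beta_m\}$ minus the number with $\omega_j\in\{\alpha_1,\ldots,\alpha_m\}$. *)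

From Stdlib Require Import Reals ZArith List Lia ClassicalEpsilon.
From Coquelicot Require Import Coquelicot.
Import ListNotations.
Open Scope R_scope.

Record P3 := mkP { px : R; py : R; pz : R }.

Definition dist3 (p q : P3) : R :=
  sqrt ((px p - px q) ^ 2 + (py p - py q) ^ 2 + (pz p - pz q) ^ 2).

Definition intR3 (S : P3 -> Prop) (p : P3) : Prop :=
  exists e, 0 < e /\ forall q, dist3 p q < e -> S q.

Definition Omega (m : nat) (a : R) (i : nat) (p : P3) : Prop :=
  let M := INR m in
  0 <= pz p <= 1 /\
  (((1 <= i <= m)%nat /\
      (INR i - 1) * a <= px p < INR i * a /\ 0 <= py p <= 1)
   \/ ((m + 1 <= i <= 2 * m - 1)%nat /\
      M * a <= px p <= 1 /\
      (INR i - M - 1) / M <= py p < (INR i - M) / M)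
   \/ (i = (2 * m)%nat /\
      M * a <= px p <= 1 /\ (M - 1) / M <= py p <= 1)).

Definition f_piece (m : nat) (a b : R) (i : nat) (p : P3) : P3 :=
  let M := INR m in
  if Nat.leb i m then
    mkP ((px p - (INR i - 1) * a) / a)
        (py p / M + (INR i - 1) / M)
        ((1 - M * b) * pz p)
  else
    mkP ((px p - M * a) / (1 - M * a))
        (M * py p - INR i + M + 1)
        (b * pz p + 1 - M * b + b * (INR i - M - 1)).

(** Graph of f_{a,b}: f p = p' (the Omega_i are disjoint and cover [0,1]^3). *)
Definition f_graph (m : nat) (a b : R) (p p' : P3) : Prop :=
  exists i, (1 <= i <= 2 * m)%nat /\ Omega m a i p /\ p' = f_piece m a b i p.

(** A full orbit (q n = f^n (q 0), n in Z); since f is a bijection of [0,1]^3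
    this is exactly the two-sided orbit of q 0. *)
Definition orbit (m : nat) (a b : R) (q : Z -> P3) : Prop :=
  forall n : Z, f_graph m a b (q n) (q (n + 1)%Z).

(** X_{a,b} = intersection over n in Z of f^{-n}(union_i int Omega_i). *)
Definition X (m : nat) (a b : R) (p : P3) : Prop :=
  exists q : Z -> P3, orbit m a b q /\ q 0%Z = p /\
    forall n, exists i, (1 <= i <= 2 * m)%nat /\ intR3 (Omega m a i) (q n).

Definition pi_rel (m : nat) (a b : R) (p : P3) (w : Z -> nat) : Prop :=
  exists q : Z -> P3, orbit m a b q /\ q 0%Z = p /\
    forall n, (1 <= w n <= 2 * m)%nat /\ intR3 (Omega m a (w n)) (q n).

Definition pi_ab (m : nat) (a b : R) (p : P3) : Z -> nat :=
  epsilon (inhabits (fun _ : Z => 0%nat)) (pi_rel m a b p).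

Inductive D : Type := Alpha (i : nat) | Beta (i : nat).

Definition inD (m : nat) (d : D) : Prop :=
  match d with Alpha i | Beta i => (1 <= i <= m)%nat end.

Definition kappa (m : nat) (i : nat) : D :=
  if Nat.leb i m then Alpha i else Beta (i - m).

Definition pibar (m : nat) (a b : R) (p : P3) : Z -> D :=
  fun n => kappa m (pi_ab m a b p n).

(** Evaluation in the monoid with zero generated by D with alpha_i beta_j =
    delta_ij.  Nonzero elements have the normal form
    beta_{j1} ... beta_{jk} alpha_{i1} ... alpha_{il}; we store
    (list of beta indices, stack of alpha indices with the last one on top);
    None represents 0. *)
Definition red_step (s : option (list nat * list nat)) (d : D)
  : option (list nat * list nat) :=
  match s with
  | None => None
  | Some (bs, al) =>
      match d with
      | Alpha i => Some (bs, i :: al)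
      | Beta j =>
          match al with
          | [] => Some (bs ++ [j], [])
          | i :: r => if Nat.eqb i j then Some (bs, r) else None
          end
      end
  end.

Definition red (w : list D) : option (list nat * list nat) :=
  fold_left red_step w (Some ([], [])).

Definition word (w : Z -> D) (i j : Z) : list D :=
  map (fun k => w (i + Z.of_nat k)%Z) (seq 0 (Z.to_nat (j - i + 1))).

Definition Sigma_D (m : nat) (w : Z -> D) : Prop :=
  (forall n, inD m (w n)) /\
  (forall i j : Z, (i < j)%Z -> red (word w i j) <> None).

Definition sgnD (d : D) : Z := match d with Alpha _ => 1%Z | Beta _ => (-1)%Z end.

Fixpoint sumZ (g : nat -> Z) (n : nat) : Z :=
  match n with O => 0%Z | S k => (sumZ g k + g k)%Z end.

Definition H (w : Z -> D) (i : Z) : Z :=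
  if Z.leb 0 i then sumZ (fun k => sgnD (w (Z.of_nat k))) (Z.to_nat i)
  else (- sumZ (fun k => sgnD (w (i + Z.of_nat k)%Z)) (Z.to_nat (- i)))%Z.

Definition A_set (m : nat) (w : Z -> D) : Prop :=
  Sigma_D m w /\
  (LimInf_seq (fun n => IZR (H w (Z.of_nat n))) = m_infty \/
   LimInf_seq (fun n => IZR (H w (- Z.of_nat n)%Z)) = m_infty).

(** Homeomorphism onto its image, for g : B -> D^Z with B ⊆ R^3 carrying the
    subspace (Euclidean) topology and D^Z the product of discrete topologies
    (basic open sets: cylinders fixing the coordinates |n| <= N). *)
Definition homeo_onto_image (B : P3 -> Prop) (g : P3 -> Z -> D) : Prop :=
  (forall p p', B p -> B p' -> (forall n, g p n = g p' n) -> p = p') /\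
  (forall p, B p -> forall N : nat, exists d, 0 < d /\
     forall p', B p' -> dist3 p p' < d ->
       forall n, (Z.abs n <= Z.of_nat N)%Z -> g p' n = g p n) /\
  (forall p, B p -> forall e, 0 < e -> exists N : nat,
     forall p', B p' ->
       (forall n, (Z.abs n <= Z.of_nat N)%Z -> g p' n = g p n) ->
       dist3 p p' < e).

(* If two points of X have itineraries agreeing on [-N, N], they are close.  On every
   piece f stretches the x-direction by at least 1 / (1 - (m-1) a) > 1 and shrinks the
   z-direction by at least the factor 1 - (m-1) b < 1, so the x-gap at time 0 is at most
   (1 - (m-1) a)^N and the z-gap at most (1 - (m-1) b)^N.  In the y-direction an alpha-piece
   divides gaps by m and a beta-piece multiplies them by m, so m^(H_n) (y_n - y'_n) is
   constant along the common itinerary and the y-gap at time 0 is at most m^(H_n); on A the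
   height H is unbounded below on one side, which makes this small.  This gives injectivity
   and continuity of the inverse.  Continuity itself holds because the pieces are separated
   near interior points and the branches of f and their inverses are Lipschitz; backwards in
   time one uses that distinct branches have disjoint images of the interiors. *)

From Stdlib Require Import Reals ZArith List Lia Lra ClassicalEpsilon.
From Coquelicot Require Import Coquelicot.
Open Scope R_scope.

(* Sup-norm balls: they define the topology of [dist3] and are preserved, up to a factor,
   by the diagonal affine branches of f. *)
Definition close3 (e : R) (u v : P3) : Prop :=
  Rabs (px u - px v) < e /\ Rabs (py u - py v) < e /\ Rabs (pz u - pz v) < e.

Lemma Rabs_le_sqrt_sum3 (x y z : R) : Rabs x <= sqrt (x ^ 2 + y ^ 2 + z ^ 2).
Proof.
  rewrite <- sqrt_Rsqr_abs. apply sqrt_le_1_alt. unfold Rsqr.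
  pose proof (pow2_ge_0 y). pose proof (pow2_ge_0 z). simpl in *. lra.
Qed.

Lemma dist3_close3 e u v : dist3 u v < e -> close3 e u v.
Proof.
  unfold dist3, close3. set (x := px u - px v). set (y := py u - py v). set (z := pz u - pz v).
  intros H.
  pose proof (Rabs_le_sqrt_sum3 x y z).
  pose proof (Rabs_le_sqrt_sum3 y x z). pose proof (Rabs_le_sqrt_sum3 z y x).
  replace (y ^ 2 + x ^ 2 + z ^ 2) with (x ^ 2 + y ^ 2 + z ^ 2) in * by ring.
  replace (z ^ 2 + y ^ 2 + x ^ 2) with (x ^ 2 + y ^ 2 + z ^ 2) in * by ring.
  lra.
Qed.

Lemma close3_dist3 e u v : close3 (e / 3) u v -> dist3 u v < e.
Proof.
  unfold dist3, close3. set (x := px u - px v). set (y := py u - py v). set (z := pz u - pz v).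
  intros [Hx [Hy Hz]].
  assert (He : 0 < e) by (pose proof (Rabs_pos x); lra).
  assert (Hsq : forall t, Rabs t < e / 3 -> t ^ 2 < e ^ 2 / 9).
  { intros t Ht. rewrite <- pow2_abs. pose proof (Rabs_pos t).
    simpl. nra. }
  rewrite <- (sqrt_pow2 e) by lra. apply sqrt_lt_1_alt.
  pose proof (pow2_ge_0 x). pose proof (pow2_ge_0 y). pose proof (pow2_ge_0 z).
  pose proof (Hsq x Hx). pose proof (Hsq y Hy). pose proof (Hsq z Hz). lra.
Qed.

Lemma close3_le e e' u v : e <= e' -> close3 e u v -> close3 e' u v.
Proof. unfold close3; lra. Qed.

Lemma close3_trans e1 e2 u v w : close3 e1 u v -> close3 e2 v w -> close3 (e1 + e2) u w.
Proof.
  unfold close3; intros [Hx [Hy Hz]] [Gx [Gy Gz]].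
  pose proof (Rabs_triang (px u - px v) (px v - px w)).
  pose proof (Rabs_triang (py u - py v) (py v - py w)).
  pose proof (Rabs_triang (pz u - pz v) (pz v - pz w)).
  replace (px u - px v + (px v - px w)) with (px u - px w) in * by ring.
  replace (py u - py v + (py v - py w)) with (py u - py w) in * by ring.
  replace (pz u - pz v + (pz v - pz w)) with (pz u - pz w) in * by ring.
  lra.
Qed.

Lemma close3_all_eq u v : (forall e, 0 < e -> close3 e u v) -> u = v.
Proof.
  intros H.
  assert (Hzero : forall t, (forall e, 0 < e -> Rabs t < e) -> t = 0).
  { intros t Ht. destruct (Req_dec t 0) as [|Hne]; auto.
    specialize (Ht _ (Rabs_pos_lt _ Hne)). lra. }
  assert (Ex : px u - px v = 0) by (apply Hzero; intros e He; apply (H e He)).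
  assert (Ey : py u - py v = 0) by (apply Hzero; intros e He; apply (H e He)).
  assert (Ez : pz u - pz v = 0) by (apply Hzero; intros e He; apply (H e He)).
  destruct u, v; simpl in *; f_equal; lra.
Qed.

Lemma close3_scale L sx sy sz e u v u' v' : 0 < L ->
  Rabs sx <= L -> Rabs sy <= L -> Rabs sz <= L ->
  px u' - px v' = sx * (px u - px v) ->
  py u' - py v' = sy * (py u - py v) ->
  pz u' - pz v' = sz * (pz u - pz v) ->
  close3 e u v -> close3 (L * e) u' v'.
Proof.
  unfold close3. intros HL Hsx Hsy Hsz -> -> -> [Hx [Hy Hz]]. rewrite !Rabs_mult.
  pose proof (Rabs_pos sx). pose proof (Rabs_pos sy). pose proof (Rabs_pos sz).
  pose proof (Rabs_pos (px u - px v)). pose proof (Rabs_pos (py u - py v)).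
  pose proof (Rabs_pos (pz u - pz v)).
  repeat split; nra.
Qed.

Lemma intR3_mem S u : intR3 S u -> S u.
Proof.
  intros [e [He H]]. apply H. unfold dist3.
  replace ((px u - px u) ^ 2 + (py u - py u) ^ 2 + (pz u - pz u) ^ 2) with 0 by ring.
  rewrite sqrt_0. exact He.
Qed.

Lemma intR3_open S u : intR3 S u -> exists r, 0 < r /\ forall v, close3 r u v -> intR3 S v.
Proof.
  intros [e [He H]]. exists (e / 6). split; [lra|].
  intros v Huv. exists (e / 6). split; [lra|]. intros z Hvz.
  apply H, close3_dist3, (close3_le (e / 6 + e / 6)); [lra|].
  eapply close3_trans; [exact Huv | apply dist3_close3, Hvz].
Qed.

Definition in_unit_cube (u : P3) : Prop :=
  0 <= px u <= 1 /\ 0 <= py u <= 1 /\ 0 <= pz u <= 1.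

Lemma intR3_open_unit_cube S u : (forall v, S v -> in_unit_cube v) -> intR3 S u ->
  0 < px u < 1 /\ 0 < py u < 1 /\ 0 < pz u < 1.
Proof.
  intros HS Hu. destruct (intR3_open S u Hu) as [r [Hr Hnear]].
  assert (Hshift : forall s, Rabs s = r / 2 ->
            in_unit_cube (mkP (px u + s) (py u + s) (pz u + s))).
  { intros s Hs. apply HS, intR3_mem, Hnear. unfold close3; cbn [px py pz].
    replace (px u - (px u + s)) with (- s) by ring.
    replace (py u - (py u + s)) with (- s) by ring.
    replace (pz u - (pz u + s)) with (- s) by ring.
    rewrite Rabs_Ropp, Hs. repeat split; lra. }
  pose proof (Hshift (r / 2) ltac:(rewrite Rabs_pos_eq; lra)) as Hup.
  pose proof (Hshift (- (r / 2)) ltac:(rewrite Rabs_Ropp, Rabs_pos_eq; lra)) as Hdown.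
  unfold in_unit_cube in *; cbn [px py pz] in *. lra.
Qed.

Lemma in_unit_cube_sub u v : in_unit_cube u -> in_unit_cube v ->
  Rabs (px u - px v) <= 1 /\ Rabs (py u - py v) <= 1 /\ Rabs (pz u - pz v) <= 1.
Proof. unfold in_unit_cube; intros Hu Hv. repeat split; apply Rabs_le; lra. Qed.

Lemma nat_eq_of_INR_near (i j : nat) : INR i < INR j + 1 -> INR j < INR i + 1 -> i = j.
Proof.
  rewrite <- !S_INR. intros Hij Hji. apply INR_lt in Hij, Hji. lia.
Qed.

Lemma geometric_bound (d : nat -> R) c N : 0 <= c ->
  (forall k, (k < N)%nat -> Rabs (d k) <= c * Rabs (d (S k))) ->
  Rabs (d 0%nat) <= c ^ N * Rabs (d N).
Proof.
  intros Hc Hstep. induction N as [|N IH]; simpl; [lra|].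
  pose proof (pow_le c N Hc). pose proof (Hstep N (Nat.lt_succ_diag_r N)).
  apply (Rle_trans _ _ _ (IH (fun k Hk => Hstep k (Nat.lt_lt_succ_r _ _ Hk)))).
  rewrite (Rmult_comm c), Rmult_assoc. apply Rmult_le_compat_l; auto.
Qed.

Lemma Rpower_lt_of_lt_ln_div M y e : 1 < M -> 0 < e -> y < ln e / ln M -> Rpower M y < e.
Proof.
  intros HM He Hy. assert (HlnM : 0 < ln M) by (rewrite <- ln_1; apply ln_increasing; lra).
  replace e with (Rpower M (ln e / ln M)) at 1.
  - apply Rpower_lt; auto.
  - unfold Rpower. replace (ln e / ln M * ln M) with (ln e) by (field; lra). apply exp_ln, He.
Qed.

Lemma LimInf_seq_m_infty_lt (u : nat -> R) B : LimInf_seq u = m_infty -> exists n, u n < B.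
Proof.
  intros Hu. destruct (ex_LimInf_seq u) as [l Hl].
  rewrite (is_LimInf_seq_unique u l Hl) in Hu. subst l.
  destruct (Hl B 0%nat) as [n [_ Hn]]. eauto.
Qed.

Lemma exists_delta_on_window (P : Z -> R -> Prop) :
  (forall n d d', 0 < d' <= d -> P n d -> P n d') ->
  (forall n, exists d, 0 < d /\ P n d) ->
  forall N : nat, exists d, 0 < d /\ forall n, (Z.abs n <= Z.of_nat N)%Z -> P n d.
Proof.
  intros Hmono Hex N. induction N as [|N [d [Hd HN]]].
  - destruct (Hex 0%Z) as [d [Hd H0]]. exists d. split; auto.
    intros n Hn. replace n with 0%Z by lia. exact H0.
  - destruct (Hex (Z.of_nat (S N))) as [d1 [Hd1 H1]].
    destruct (Hex (- Z.of_nat (S N))%Z) as [d2 [Hd2 H2]].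
    assert (Hpos : 0 < Rmin d (Rmin d1 d2)) by (apply Rmin_pos; auto; apply Rmin_pos; auto).
    pose proof (Rmin_l d (Rmin d1 d2)). pose proof (Rmin_r d (Rmin d1 d2)).
    pose proof (Rmin_l d1 d2). pose proof (Rmin_r d1 d2).
    exists (Rmin d (Rmin d1 d2)). split; auto. intros n Hn.
    destruct (Z_le_gt_dec (Z.abs n) (Z.of_nat N)) as [Hin | Hout].
    + apply (Hmono n d); [lra | auto].
    + destruct (Z_le_gt_dec 0 n).
      * replace n with (Z.of_nat (S N)) by lia. apply (Hmono _ d1); [lra | auto].
      * replace n with (- Z.of_nat (S N))%Z by lia. apply (Hmono _ d2); [lra | auto].
Qed.

Lemma window_constant (phi : Z -> R) (N : nat) :
  (forall n, (- Z.of_nat N <= n < Z.of_nat N)%Z -> phi (n + 1)%Z = phi n) ->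
  forall n, (Z.abs n <= Z.of_nat N)%Z -> phi n = phi 0%Z.
Proof.
  intros Hstep.
  assert (Hnat : forall k : nat, (k <= N)%nat ->
            phi (Z.of_nat k) = phi 0%Z /\ phi (- Z.of_nat k)%Z = phi 0%Z).
  { induction k as [|k IH]; intros Hk; [auto|].
    destruct (IH ltac:(lia)) as [Hpos Hneg]. split.
    - rewrite <- Hpos, Nat2Z.inj_succ, <- Z.add_1_r. apply Hstep. lia.
    - rewrite <- Hneg. replace (- Z.of_nat k)%Z with (- Z.of_nat (S k) + 1)%Z by lia.
      symmetry. apply Hstep. lia. }
  intros n Hn. destruct (Z_le_gt_dec 0 n).
  - replace n with (Z.of_nat (Z.to_nat n)) by lia. apply Hnat. lia.
  - replace n with (- Z.of_nat (Z.to_nat (- n)))%Z by lia. apply Hnat. lia.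
Qed.

Lemma kappa_inj m i j : kappa m i = kappa m j -> i = j.
Proof.
  unfold kappa. destruct (Nat.leb i m) eqn:Ei, (Nat.leb j m) eqn:Ej; intros E; inversion E;
    auto.
  apply Nat.leb_gt in Ei, Ej. lia.
Qed.

Lemma sumZ_shift g k : sumZ g (S k) = (g 0%nat + sumZ (fun j => g (S j)) k)%Z.
Proof. induction k as [|k IH]; simpl in *; lia. Qed.

Lemma sumZ_ext g g' k : (forall j, (j < k)%nat -> g j = g' j) -> sumZ g k = sumZ g' k.
Proof.
  induction k as [|k IH]; intros E; simpl; auto.
  rewrite IH, E; auto.
Qed.

Lemma H_neg W k :
  H W (- Z.of_nat k)%Z = (- sumZ (fun j => sgnD (W (- Z.of_nat k + Z.of_nat j)%Z)) k)%Z.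
Proof.
  destruct k as [|k]; [reflexivity|].
  unfold H. rewrite (proj2 (Z.leb_gt _ _)) by lia. rewrite Z.opp_involutive, Nat2Z.id.
  reflexivity.
Qed.

Lemma H_succ W n : H W (n + 1)%Z = (H W n + sgnD (W n))%Z.
Proof.
  destruct (Z_le_gt_dec 0 n).
  - unfold H. rewrite !(proj2 (Z.leb_le _ _)) by lia.
    replace (Z.to_nat (n + 1)) with (S (Z.to_nat n)) by lia.
    simpl. rewrite Z2Nat.id by lia. reflexivity.
  - assert (exists k : nat, n = (- Z.of_nat (S k))%Z) as [k ->]
      by (exists (Z.to_nat (- n - 1)); lia).
    replace (- Z.of_nat (S k) + 1)%Z with (- Z.of_nat k)%Z by lia.
    rewrite !H_neg, sumZ_shift.
    rewrite (sumZ_ext (fun j => sgnD (W (- Z.of_nat (S k) + Z.of_nat (S j))%Z))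
                      (fun j => sgnD (W (- Z.of_nat k + Z.of_nat j)%Z))).
    + rewrite Z.add_0_r. lia.
    + intros j _. do 2 f_equal. lia.
Qed.

Section Dynamics.

Variables (m : nat) (a b : R).
Hypothesis m_ge2 : (2 <= m)%nat.
Hypothesis a_pos : 0 < a.
Hypothesis ma_lt1 : INR m * a < 1.
Hypothesis b_pos : 0 < b.
Hypothesis mb_lt1 : INR m * b < 1.

Lemma INR_m_ge2 : 2 <= INR m.
Proof. apply le_INR in m_ge2. simpl in m_ge2. lra. Qed.

Ltac INR_le H := apply le_INR in H; rewrite ?plus_INR, ?mult_INR in H; simpl in H.

Lemma Omega_in_unit_cube i u : Omega m a i u -> in_unit_cube u.
Proof.
  pose proof INR_m_ge2 as HM.
  intros [Hz [[[Hi1 Hi2] [Hx Hy]] | [[[Hi1 Hi2] [Hx [Hy1 Hy2]]] | [Hi [Hx [Hy1 Hy2]]]]]];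
  unfold in_unit_cube.
  - INR_le Hi1. INR_le Hi2. split; [split; nra | lra].
  - assert (Hi3 : (i + 1 <= 2 * m)%nat) by lia. INR_le Hi1. INR_le Hi3.
    rewrite Rle_div_l in Hy1 by lra. rewrite <- Rlt_div_r in Hy2 by lra.
    split; [split; nra|]. split; [split; nra | lra].
  - rewrite Rle_div_l in Hy1 by lra. split; [split; nra|]. split; [split; nra | lra].
Qed.

Lemma Omega_unique i j u : Omega m a i u -> Omega m a j u -> i = j.
Proof.
  pose proof INR_m_ge2 as HM.
  intros [_ [[[Hi1 Hi2] [Hx Hy]] | [[[Hi1 Hi2] [Hx [Hy1 Hy2]]] | [Hi [Hx [Hy1 Hy2]]]]]]
         [_ [[[Hj1 Hj2] [Gx Gy]] | [[[Hj1 Hj2] [Gx [Gy1 Gy2]]] | [Hj [Gx [Gy1 Gy2]]]]]];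
    try lia.
  - apply nat_eq_of_INR_near; nra.
  - INR_le Hi2. nra.
  - INR_le Hi2. nra.
  - INR_le Hj2. nra.
  - rewrite Rle_div_l in Hy1, Gy1 by lra. rewrite <- Rlt_div_r in Hy2, Gy2 by lra.
    apply nat_eq_of_INR_near; lra.
  - assert (Hi3 : (i + 1 <= 2 * m)%nat) by lia. INR_le Hi3.
    rewrite <- Rlt_div_r in Hy2 by lra. rewrite Rle_div_l in Gy1 by lra. lra.
  - INR_le Hj2. nra.
  - assert (Hj3 : (j + 1 <= 2 * m)%nat) by lia. INR_le Hj3.
    rewrite <- Rlt_div_r in Gy2 by lra. rewrite Rle_div_l in Hy1 by lra. lra.
Qed.

Definition f_inv (i : nat) (P : P3) : P3 :=
  if Nat.leb i m then
    mkP (a * px P + (INR i - 1) * a) (INR m * py P - (INR i - 1)) (pz P / (1 - INR m * b))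
  else
    mkP ((1 - INR m * a) * px P + INR m * a) ((py P + INR i - INR m - 1) / INR m)
        ((pz P - 1 + INR m * b - b * (INR i - INR m - 1)) / b).

Lemma f_piece_inv i P : f_piece m a b i (f_inv i P) = P.
Proof.
  pose proof INR_m_ge2 as HM. unfold f_piece, f_inv. destruct P as [x y z].
  destruct (Nat.leb i m); cbn [px py pz]; f_equal; field; lra.
Qed.

Lemma f_inv_piece i P : f_inv i (f_piece m a b i P) = P.
Proof.
  pose proof INR_m_ge2 as HM. unfold f_piece, f_inv. destruct P as [x y z].
  destruct (Nat.leb i m); cbn [px py pz]; f_equal; field; lra.
Qed.

Definition slope_x (i : nat) : R := if Nat.leb i m then / a else / (1 - INR m * a).
Definition slope_y (i : nat) : R := if Nat.leb i m then / INR m else INR m.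
Definition slope_z (i : nat) : R := if Nat.leb i m then 1 - INR m * b else b.

Lemma f_piece_sub i u v :
  px (f_piece m a b i u) - px (f_piece m a b i v) = slope_x i * (px u - px v) /\
  py (f_piece m a b i u) - py (f_piece m a b i v) = slope_y i * (py u - py v) /\
  pz (f_piece m a b i u) - pz (f_piece m a b i v) = slope_z i * (pz u - pz v).
Proof.
  pose proof INR_m_ge2 as HM. unfold f_piece, slope_x, slope_y, slope_z.
  destruct (Nat.leb i m); cbn [px py pz]; repeat split; field; lra.
Qed.

Lemma f_inv_sub i u v :
  px (f_inv i u) - px (f_inv i v) = / slope_x i * (px u - px v) /\
  py (f_inv i u) - py (f_inv i v) = / slope_y i * (py u - py v) /\
  pz (f_inv i u) - pz (f_inv i v) = / slope_z i * (pz u - pz v).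
Proof.
  pose proof INR_m_ge2 as HM. unfold f_inv, slope_x, slope_y, slope_z.
  destruct (Nat.leb i m); cbn [px py pz]; repeat split; field; lra.
Qed.

Definition lip : R := / a + / (1 - INR m * a) + INR m + / (1 - INR m * b) + / b + 1.

Lemma slope_bounds i s : s = slope_x i \/ s = slope_y i \/ s = slope_z i ->
  0 < s /\ s <= lip /\ / s <= lip.
Proof.
  pose proof INR_m_ge2 as HM.
  assert (0 < / a) by (apply Rinv_0_lt_compat; lra).
  assert (0 < / b) by (apply Rinv_0_lt_compat; lra).
  assert (0 < / (1 - INR m * a)) by (apply Rinv_0_lt_compat; lra).
  assert (0 < / (1 - INR m * b)) by (apply Rinv_0_lt_compat; lra).
  assert (0 < / INR m <= 1).
  { split; [apply Rinv_0_lt_compat; lra|]. rewrite <- Rinv_1. apply Rinv_le_contravar; lra. }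
  unfold lip, slope_x, slope_y, slope_z.
  intros Hs; destruct (Nat.leb i m); destruct Hs as [-> | [-> | ->]];
    rewrite ?Rinv_inv; repeat split; nra.
Qed.

Lemma lip_pos : 0 < lip.
Proof. destruct (slope_bounds 0 (slope_x 0)) as [? [? _]]; auto. lra. Qed.

Lemma slope_x_expanding i : 1 <= (1 - (INR m - 1) * a) * slope_x i.
Proof.
  unfold slope_x. destruct (Nat.leb i m).
  - apply (Rmult_le_reg_r a); auto. rewrite Rmult_assoc, Rinv_l by lra. lra.
  - apply (Rmult_le_reg_r (1 - INR m * a)); [lra|]. rewrite Rmult_assoc, Rinv_l by lra. nra.
Qed.

Lemma slope_z_contracting i : slope_z i <= 1 - (INR m - 1) * b.
Proof. unfold slope_z. destruct (Nat.leb i m); lra. Qed.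

Lemma slope_y_Rpower i : slope_y i * Rpower (INR m) (IZR (sgnD (kappa m i))) = 1.
Proof.
  pose proof INR_m_ge2 as HM. unfold slope_y, kappa. destruct (Nat.leb i m); cbn [sgnD].
  - change (IZR 1) with 1. rewrite Rpower_1 by lra. field. lra.
  - change (IZR (-1)) with (IZR (Z.opp 1)).
    rewrite opp_IZR, Rpower_Ropp, Rpower_1 by lra. field. lra.
Qed.

Lemma f_piece_close3 i e u v : close3 e u v ->
  close3 (lip * e) (f_piece m a b i u) (f_piece m a b i v).
Proof.
  destruct (f_piece_sub i u v) as [Ex [Ey Ez]].
  destruct (slope_bounds i (slope_x i)) as [Px [Lx _]]; auto.
  destruct (slope_bounds i (slope_y i)) as [Py [Ly _]]; auto.
  destruct (slope_bounds i (slope_z i)) as [Pz [Lz _]]; auto.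
  apply (close3_scale lip (slope_x i) (slope_y i) (slope_z i) e u v); auto using lip_pos;
    rewrite Rabs_pos_eq; lra.
Qed.

Lemma f_inv_close3 i e u v : close3 e u v -> close3 (lip * e) (f_inv i u) (f_inv i v).
Proof.
  destruct (f_inv_sub i u v) as [Ex [Ey Ez]].
  destruct (slope_bounds i (slope_x i)) as [Px [_ Lx]]; auto.
  destruct (slope_bounds i (slope_y i)) as [Py [_ Ly]]; auto.
  destruct (slope_bounds i (slope_z i)) as [Pz [_ Lz]]; auto.
  apply (close3_scale lip (/ slope_x i) (/ slope_y i) (/ slope_z i) e u v);
    auto using lip_pos; rewrite Rabs_pos_eq; auto; apply Rlt_le, Rinv_0_lt_compat; lra.
Qed.

Lemma intR3_Omega_open_unit_cube i u : intR3 (Omega m a i) u ->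
  0 < px u < 1 /\ 0 < py u < 1 /\ 0 < pz u < 1.
Proof. apply intR3_open_unit_cube, Omega_in_unit_cube. Qed.

(* The images of the interiors are separated by y (alpha-pieces) or by z (beta-pieces). *)
Lemma f_piece_interior_inj i j u v : intR3 (Omega m a i) u -> intR3 (Omega m a j) v ->
  f_piece m a b i u = f_piece m a b j v -> i = j.
Proof.
  intros Hu Hv E. pose proof INR_m_ge2 as HM.
  destruct (intR3_Omega_open_unit_cube i u Hu) as [_ [Uy Uz]].
  destruct (intR3_Omega_open_unit_cube j v Hv) as [_ [Vy Vz]].
  assert (Ey := f_equal py E). assert (Ez := f_equal pz E).
  unfold f_piece in Ey, Ez.
  destruct (Nat.leb i m) eqn:Ei; destruct (Nat.leb j m) eqn:Ej; cbn [py pz] in Ey, Ez.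
  - assert (py u + INR i = py v + INR j).
    { apply (Rmult_eq_reg_r (/ INR m)); [|apply Rinv_neq_0_compat; lra].
      replace ((py u + INR i) * / INR m) with (py u / INR m + (INR i - 1) / INR m + / INR m)
        by (field; lra).
      rewrite Ey. field. lra. }
    apply nat_eq_of_INR_near; lra.
  - apply Nat.leb_gt in Ej. assert (Hj : (m + 1 <= j)%nat) by lia. INR_le Hj. nra.
  - apply Nat.leb_gt in Ei. assert (Hi : (m + 1 <= i)%nat) by lia. INR_le Hi. nra.
  - assert (pz u + INR i = pz v + INR j).
    { apply (Rmult_eq_reg_l b); [|lra]. nra. }
    apply nat_eq_of_INR_near; lra.
Qed.

(** * Continuity of the itinerary *)

Definition coded_orbit (p : P3) (q : Z -> P3) (w : Z -> nat) : Prop :=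
  orbit m a b q /\ q 0%Z = p /\
  forall n, (1 <= w n <= 2 * m)%nat /\ intR3 (Omega m a (w n)) (q n).

Lemma X_coded_orbit p : X m a b p -> exists q, coded_orbit p q (pi_ab m a b p).
Proof.
  intros [q [Horb [Hq0 Hint]]].
  change (pi_rel m a b p (pi_ab m a b p)). unfold pi_ab. apply epsilon_spec.
  destruct (choice _ Hint) as [w Hw]. exists w, q. auto.
Qed.

Lemma coded_orbit_step p q w n : coded_orbit p q w -> q (n + 1)%Z = f_piece m a b (w n) (q n).
Proof.
  intros [Horb [_ Hint]]. destruct (Horb n) as [j [_ [Hj ->]]].
  destruct (Hint n) as [_ Hn]. f_equal. apply (Omega_unique j (w n) (q n)); auto.
  apply intR3_mem; auto.
Qed.

Lemma coded_orbit_in_unit_cube p q w n : coded_orbit p q w -> in_unit_cube (q n).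
Proof.
  intros [_ [_ Hint]]. destruct (Hint n) as [_ Hn].
  apply (Omega_in_unit_cube (w n)), intR3_mem, Hn.
Qed.

Lemma itinerary_locally_constant p q w n : coded_orbit p q w ->
  exists r, 0 < r /\ forall p' q' w', coded_orbit p' q' w' ->
    close3 r (q n) (q' n) -> w' n = w n.
Proof.
  intros [_ [_ Hint]]. destruct (Hint n) as [_ Hn].
  destruct (intR3_open _ _ Hn) as [r [Hr Hnear]]. exists r. split; auto.
  intros p' q' w' [_ [_ Hint']] Hqq. destruct (Hint' n) as [_ Hn'].
  apply (Omega_unique _ _ (q' n)); apply intR3_mem; auto.
Qed.

Lemma orbit_close3_forward p q w (k : nat) e : coded_orbit p q w -> 0 < e ->
  exists d, 0 < d /\ forall p' q' w', coded_orbit p' q' w' ->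
    close3 d p p' -> close3 e (q (Z.of_nat k)) (q' (Z.of_nat k)).
Proof.
  intros Hq. revert e. induction k as [|k IH]; intros e He.
  - exists e. split; auto. intros p' q' w' Hq' Hpp.
    change (Z.of_nat 0) with 0%Z.
    destruct Hq as [_ [-> _]], Hq' as [_ [-> _]]. exact Hpp.
  - destruct (itinerary_locally_constant p q w (Z.of_nat k) Hq) as [r [Hr Hw]].
    pose proof lip_pos.
    destruct (IH (Rmin r (e / lip))) as [d [Hd Hclose]].
    { apply Rmin_pos; auto. apply Rdiv_lt_0_compat; auto. }
    exists d. split; auto. intros p' q' w' Hq' Hpp.
    pose proof (Hclose p' q' w' Hq' Hpp) as Hk.
    assert (Ew : w' (Z.of_nat k) = w (Z.of_nat k)).
    { apply (Hw p' q'); auto. eapply close3_le; [apply Rmin_l | exact Hk]. }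
    rewrite Nat2Z.inj_succ, <- Z.add_1_r.
    rewrite (coded_orbit_step _ _ _ _ Hq), (coded_orbit_step _ _ _ _ Hq'), Ew.
    replace e with (lip * (e / lip)) by (field; lra).
    apply f_piece_close3. eapply close3_le; [apply Rmin_r | exact Hk].
Qed.

Lemma orbit_close3_backward p q w (k : nat) e : coded_orbit p q w -> 0 < e ->
  exists d, 0 < d /\ forall p' q' w', coded_orbit p' q' w' ->
    close3 d p p' -> close3 e (q (- Z.of_nat k)%Z) (q' (- Z.of_nat k)%Z).
Proof.
  intros Hq. revert e. induction k as [|k IH]; intros e He.
  - exists e. split; auto. intros p' q' w' Hq' Hpp.
    change (- Z.of_nat 0)%Z with 0%Z.
    destruct Hq as [_ [-> _]], Hq' as [_ [-> _]]. exact Hpp.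
  - set (n := (- Z.of_nat (S k))%Z).
    assert (En : (n + 1 = - Z.of_nat k)%Z) by (unfold n; lia).
    pose proof Hq as [_ [_ Hint]]. destruct (Hint n) as [_ Hn].
    destruct (intR3_open _ _ Hn) as [r [Hr Hnear]].
    pose proof lip_pos.
    destruct (IH (Rmin r e / lip)) as [d [Hd Hclose]].
    { apply Rdiv_lt_0_compat; auto. apply Rmin_pos; auto. }
    exists d. split; auto. intros p' q' w' Hq' Hpp.
    pose proof (Hclose p' q' w' Hq' Hpp) as Hk.
    pose proof (coded_orbit_step _ _ _ n Hq) as Estep.
    pose proof (coded_orbit_step _ _ _ n Hq') as Estep'.
    rewrite En in Estep, Estep'.
    (* Pull q' back along the branch of q: u lies in the same open piece, hence is q' n. *)
    set (u := f_inv (w n) (q' (- Z.of_nat k)%Z)).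
    assert (Hu : close3 (Rmin r e) (q n) u).
    { replace (q n) with (f_inv (w n) (q (- Z.of_nat k)%Z)) by (rewrite Estep; apply f_inv_piece).
      replace (Rmin r e) with (lip * (Rmin r e / lip)) by (field; lra).
      apply f_inv_close3, Hk. }
    assert (Hwn : w n = w' n).
    { destruct Hq' as [_ [_ Hint']]. destruct (Hint' n) as [_ Hn'].
      apply (f_piece_interior_inj _ _ u (q' n)); auto.
      - apply Hnear. eapply close3_le; [apply Rmin_l | exact Hu].
      - unfold u. rewrite f_piece_inv. auto. }
    assert (Eu : u = q' n).
    { unfold u. rewrite Estep', <- Hwn. apply f_inv_piece. }
    rewrite <- Eu. eapply close3_le; [apply Rmin_r | exact Hu].
Qed.

Lemma orbit_close3 p q w n e : coded_orbit p q w -> 0 < e ->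
  exists d, 0 < d /\ forall p' q' w', coded_orbit p' q' w' ->
    close3 d p p' -> close3 e (q n) (q' n).
Proof.
  intros Hq He. destruct (Z_le_gt_dec 0 n).
  - replace n with (Z.of_nat (Z.to_nat n)) by lia.
    apply (orbit_close3_forward p q w); auto.
  - replace n with (- Z.of_nat (Z.to_nat (- n)))%Z by lia.
    apply (orbit_close3_backward p q w); auto.
Qed.

Lemma itinerary_continuous p q w (N : nat) : coded_orbit p q w ->
  exists d, 0 < d /\ forall p' q' w', coded_orbit p' q' w' -> close3 d p p' ->
    forall n, (Z.abs n <= Z.of_nat N)%Z -> w' n = w n.
Proof.
  intros Hq.
  set (P n d := forall p' q' w', coded_orbit p' q' w' -> close3 d p p' -> w' n = w n).
  assert (Hmono : forall n d d', 0 < d' <= d -> P n d -> P n d').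
  { intros n d d' Hdd' Hn p' q' w' Hq' Hpp. apply (Hn p' q'); auto.
    eapply close3_le; [apply Hdd' | exact Hpp]. }
  assert (Hex : forall n, exists d, 0 < d /\ P n d).
  { intros n. destruct (itinerary_locally_constant p q w n Hq) as [r [Hr Hw]].
    destruct (orbit_close3 p q w n r Hq Hr) as [d [Hd Hclose]].
    exists d. split; auto. intros p' q' w' Hq' Hpp.
    apply (Hw p' q' w' Hq'), (Hclose p' q' w' Hq' Hpp). }
  destruct (exists_delta_on_window P Hmono Hex N) as [d [Hd Hwin]].
  exists d. split; auto. intros p' q' w' Hq' Hpp n Hn. exact (Hwin n Hn p' q' w' Hq' Hpp).
Qed.

(** * Expansion and contraction along a common itinerary *)

Definition agree_on (N : nat) (w w' : Z -> nat) : Prop :=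
  forall n, (Z.abs n <= Z.of_nat N)%Z -> w' n = w n.

Section TwoOrbits.

Variables (p p' : P3) (q q' : Z -> P3) (w w' : Z -> nat).
Hypothesis q_coded : coded_orbit p q w.
Hypothesis q'_coded : coded_orbit p' q' w'.

Lemma coded_orbit_sub n : w' n = w n ->
  px (q (n + 1)%Z) - px (q' (n + 1)%Z) = slope_x (w n) * (px (q n) - px (q' n)) /\
  py (q (n + 1)%Z) - py (q' (n + 1)%Z) = slope_y (w n) * (py (q n) - py (q' n)) /\
  pz (q (n + 1)%Z) - pz (q' (n + 1)%Z) = slope_z (w n) * (pz (q n) - pz (q' n)).
Proof.
  intros E. rewrite (coded_orbit_step _ _ _ n q_coded), (coded_orbit_step _ _ _ n q'_coded), E.
  apply f_piece_sub.
Qed.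

Lemma x_step n : w' n = w n ->
  Rabs (px (q n) - px (q' n)) <=
  (1 - (INR m - 1) * a) * Rabs (px (q (n + 1)%Z) - px (q' (n + 1)%Z)).
Proof.
  intros E. destruct (coded_orbit_sub n E) as [-> _].
  destruct (slope_bounds (w n) (slope_x (w n))) as [Hs _]; auto.
  pose proof (slope_x_expanding (w n)). pose proof (Rabs_pos (px (q n) - px (q' n))).
  rewrite Rabs_mult, (Rabs_pos_eq (slope_x _)) by lra. nra.
Qed.

Lemma z_step n : w' n = w n ->
  Rabs (pz (q (n + 1)%Z) - pz (q' (n + 1)%Z)) <=
  (1 - (INR m - 1) * b) * Rabs (pz (q n) - pz (q' n)).
Proof.
  intros E. destruct (coded_orbit_sub n E) as [_ [_ ->]].
  destruct (slope_bounds (w n) (slope_z (w n))) as [Hs _]; auto.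
  pose proof (slope_z_contracting (w n)). pose proof (Rabs_pos (pz (q n) - pz (q' n))).
  rewrite Rabs_mult, (Rabs_pos_eq (slope_z _)) by lra. nra.
Qed.

Lemma y_step n : w' n = w n ->
  Rpower (INR m) (IZR (H (fun k => kappa m (w k)) (n + 1))) *
    (py (q (n + 1)%Z) - py (q' (n + 1)%Z)) =
  Rpower (INR m) (IZR (H (fun k => kappa m (w k)) n)) * (py (q n) - py (q' n)).
Proof.
  intros E. destruct (coded_orbit_sub n E) as [_ [-> _]].
  rewrite H_succ, plus_IZR, Rpower_plus.
  rewrite <- (Rmult_1_r (Rpower _ (IZR (H _ n)))) at 2.
  rewrite <- (slope_y_Rpower (w n)). ring.
Qed.

Variable N : nat.
Hypothesis agree : agree_on N w w'.

Lemma x_estimate : Rabs (px p - px p') <= (1 - (INR m - 1) * a) ^ N.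
Proof.
  destruct q_coded as [_ [Hq0 _]], q'_coded as [_ [Hq0' _]]. rewrite <- Hq0, <- Hq0'.
  set (d k := px (q (Z.of_nat k)) - px (q' (Z.of_nat k))).
  assert (Hstep : forall k, (k < N)%nat -> Rabs (d k) <= (1 - (INR m - 1) * a) * Rabs (d (S k))).
  { intros k Hk. unfold d. rewrite Nat2Z.inj_succ, <- Z.add_1_r.
    apply x_step, agree. lia. }
  pose proof (geometric_bound d (1 - (INR m - 1) * a) N ltac:(lra) Hstep) as Hgeo.
  destruct (in_unit_cube_sub _ _ (coded_orbit_in_unit_cube p q w (Z.of_nat N) q_coded)
              (coded_orbit_in_unit_cube p' q' w' (Z.of_nat N) q'_coded)) as [HN _].
  pose proof (pow_le (1 - (INR m - 1) * a) N ltac:(lra)).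
  change (Rabs (d N) <= 1) in HN. change (Rabs (d 0%nat) <= (1 - (INR m - 1) * a) ^ N).
  pose proof (Rabs_pos (d N)). nra.
Qed.

Lemma z_estimate : Rabs (pz p - pz p') <= (1 - (INR m - 1) * b) ^ N.
Proof.
  destruct q_coded as [_ [Hq0 _]], q'_coded as [_ [Hq0' _]]. rewrite <- Hq0, <- Hq0'.
  set (d k := pz (q (- Z.of_nat k)%Z) - pz (q' (- Z.of_nat k)%Z)).
  assert (Hstep : forall k, (k < N)%nat -> Rabs (d k) <= (1 - (INR m - 1) * b) * Rabs (d (S k))).
  { intros k Hk. unfold d. replace (- Z.of_nat k)%Z with (- Z.of_nat (S k) + 1)%Z by lia.
    apply z_step, agree. lia. }
  pose proof (geometric_bound d (1 - (INR m - 1) * b) N ltac:(lra) Hstep) as Hgeo.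
  destruct (in_unit_cube_sub _ _ (coded_orbit_in_unit_cube p q w (- Z.of_nat N) q_coded)
              (coded_orbit_in_unit_cube p' q' w' (- Z.of_nat N) q'_coded)) as [_ [_ HN]].
  pose proof (pow_le (1 - (INR m - 1) * b) N ltac:(lra)).
  change (Rabs (d N) <= 1) in HN. change (Rabs (d 0%nat) <= (1 - (INR m - 1) * b) ^ N).
  pose proof (Rabs_pos (d N)). nra.
Qed.

Lemma y_estimate n : (Z.abs n <= Z.of_nat N)%Z ->
  Rabs (py p - py p') <= Rpower (INR m) (IZR (H (fun k => kappa m (w k)) n)).
Proof.
  intros Hn. pose proof INR_m_ge2 as HM.
  set (phi k := Rpower (INR m) (IZR (H (fun k => kappa m (w k)) k)) * (py (q k) - py (q' k))).
  assert (Hphi : phi n = phi 0%Z).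
  { apply (window_constant phi N); auto. intros k Hk. apply y_step, agree. lia. }
  assert (Hphi0 : phi 0%Z = py p - py p').
  { unfold phi. destruct q_coded as [_ [Hq0 _]], q'_coded as [_ [Hq0' _]]. rewrite Hq0, Hq0'.
    change (IZR (H _ 0)) with 0. rewrite Rpower_O by lra. ring. }
  rewrite <- Hphi0, <- Hphi. unfold phi. rewrite Rabs_mult, (Rabs_pos_eq (Rpower _ _))
    by (apply Rlt_le, exp_pos).
  destruct (in_unit_cube_sub _ _ (coded_orbit_in_unit_cube p q w n q_coded)
              (coded_orbit_in_unit_cube p' q' w' n q'_coded)) as [_ [Hy _]].
  pose proof (exp_pos (IZR (H (fun k => kappa m (w k)) n) * ln (INR m))).
  unfold Rpower. nra.
Qed.

End TwoOrbits.

Lemma A_set_height_small W e : A_set m W -> 0 < e ->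
  exists n, Rpower (INR m) (IZR (H W n)) < e.
Proof.
  intros [_ Hinf] He. pose proof INR_m_ge2 as HM.
  assert (Hsmall : forall h, IZR h < ln e / ln (INR m) -> Rpower (INR m) (IZR h) < e)
    by (intros h Hh; apply Rpower_lt_of_lt_ln_div; auto; lra).
  destruct Hinf as [Hinf | Hinf];
    destruct (LimInf_seq_m_infty_lt _ (ln e / ln (INR m)) Hinf) as [k Hk]; eauto.
Qed.

Lemma itinerary_determines_point p q w e : coded_orbit p q w ->
  A_set m (fun n => kappa m (w n)) -> 0 < e ->
  exists N, forall p' q' w', coded_orbit p' q' w' -> agree_on N w w' -> close3 e p p'.
Proof.
  intros Hq HA He. pose proof INR_m_ge2 as HM.
  assert (Hpow : forall c, 0 <= c < 1 -> exists N, forall n, (n >= N)%nat -> c ^ n < e).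
  { intros c Hc. destruct (pow_lt_1_zero c ltac:(rewrite Rabs_pos_eq; lra) e He) as [N HN].
    exists N. intros n Hn. specialize (HN n Hn). rewrite Rabs_pos_eq in HN; auto.
    apply pow_le. lra. }
  destruct (Hpow (1 - (INR m - 1) * a)) as [Nx HNx]; [split; nra|].
  destruct (Hpow (1 - (INR m - 1) * b)) as [Nz HNz]; [split; nra|].
  destruct (A_set_height_small _ e HA He) as [n Hn].
  exists (Nx + Nz + Z.to_nat (Z.abs n))%nat. intros p' q' w' Hq' Hagree. repeat split.
  - eapply Rle_lt_trans; [apply (x_estimate p p' q q' w w' Hq Hq' _ Hagree) | apply HNx; lia].
  - eapply Rle_lt_trans; [apply (y_estimate p p' q q' w w' Hq Hq' _ Hagree n); lia | exact Hn].
  - eapply Rle_lt_trans; [apply (z_estimate p p' q q' w w' Hq Hq' _ Hagree) | apply HNz; lia].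
Qed.

Lemma pibar_continuous p (N : nat) : X m a b p ->
  exists d, 0 < d /\ forall p', X m a b p' -> dist3 p p' < d ->
    forall n, (Z.abs n <= Z.of_nat N)%Z -> pibar m a b p' n = pibar m a b p n.
Proof.
  intros HX. destruct (X_coded_orbit p HX) as [q Hq].
  destruct (itinerary_continuous p q _ N Hq) as [d [Hd Hw]].
  exists d. split; auto. intros p' HX' Hpp n Hn.
  destruct (X_coded_orbit p' HX') as [q' Hq'].
  unfold pibar. rewrite (Hw p' q' _ Hq' (dist3_close3 _ _ _ Hpp) n Hn). reflexivity.
Qed.

Lemma pibar_inverse_continuous p e : X m a b p -> A_set m (pibar m a b p) -> 0 < e ->
  exists N : nat, forall p', X m a b p' ->
    (forall n, (Z.abs n <= Z.of_nat N)%Z -> pibar m a b p' n = pibar m a b p n) ->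
    dist3 p p' < e.
Proof.
  intros HX HA He. destruct (X_coded_orbit p HX) as [q Hq].
  destruct (itinerary_determines_point p q _ (e / 3) Hq HA ltac:(lra)) as [N HN].
  exists N. intros p' HX' Hpb. destruct (X_coded_orbit p' HX') as [q' Hq'].
  apply close3_dist3, (HN p' q' _ Hq'). intros n Hn. apply (kappa_inj m), Hpb, Hn.
Qed.

End Dynamics.

Theorem lemma3p1 (m : nat) (a b : R) :
  (2 <= m)%nat ->
  0 < a < 1 / INR m ->
  0 < b < 1 / INR m ->
  homeo_onto_image
    (fun p => X m a b p /\ A_set m (pibar m a b p))
    (pibar m a b).
Proof.
  intros Hm [Ha Ha'] [Hb Hb'].
  assert (HM : 0 < INR m) by (apply lt_0_INR; lia).
  assert (Hma : INR m * a < 1) by (rewrite <- Rlt_div_r in Ha' by lra; lra).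
  assert (Hmb : INR m * b < 1) by (rewrite <- Rlt_div_r in Hb' by lra; lra).
  split; [|split].
  - intros p p' [HX HA] [HX' _] Heq. apply close3_all_eq. intros e He.
    apply dist3_close3.
    destruct (pibar_inverse_continuous m a b Hm Ha Hma Hb Hmb p e HX HA He) as [N HN].
    apply (HN p' HX'). intros n _. symmetry. apply Heq.
  - intros p [HX _] N.
    destruct (pibar_continuous m a b Hm Ha Hma Hb Hmb p N HX) as [d [Hd Hpb]].
    exists d. split; auto. intros p' [HX' _]. apply Hpb, HX'.
  - intros p [HX HA] e He.
    destruct (pibar_inverse_continuous m a b Hm Ha Hma Hb Hmb p e HX HA He) as [N HN].
    exists N. intros p' [HX' _]. apply HN, HX'.
Qed.
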